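(* In a game with incomplete information as described in the context, let $f$ be a pure strategy profile ($f_i$ $\mathcal T_i$-measurable for each $i$) and $g$ a mixed strategy profile with each $g_i:T_i\to\mathcal M(A_i)$ being $\mathcal F_i$-measurable. If $f$ and $g$ are universally distribution equivalent, then $f$ is belief consistent with $g$, i.e. for every $i\in I$, $f_i(t_i)\in\operatorname{supp} g_i(t_i)$ for $\lambda_i$-almost all $t_i\in T_i$.
   Context: Players $I=\{1,\dots,n\}$; each $A_i$ is a compact metric space with Borel $\sigma$-algebra $\mathcal B(A_i)$; each $(T_i,\mathcal T_i,\lambda_i)$ is an atomless probability space with $\lambda_i$ complete and countably additive; $\mathcal F_i\subseteq\mathcal T_i$ is a countably generated sub-$\sigma$-algebra. $\mathcal M(A_i)$ denotes the space of Borel probability measures on $A_i$ with the topology of weak convergence, and $\operatorname{supp}\mu$ the support of $\mu\in\mathcal M(A_i)$. A mixed strategy of $i$ is a measurable map $g_i:T_i\to\mathcal M(A_i)$ (write $g_i(t_i,\cdot)$ for the measure); a pure strategy is a measurable map $f_i:T_i\to A_i$, identified with $t_i\mapsto\delta_{f_i(t_i)}$. Strategy profiles $f,g$ are universally distribution equivalent if for every $i\in I$ and every $E\in\mathcal F_i$, $\int_E f_i(t_i,\cdot)\,\mathrm d\lambda_i(t_i)=\int_E g_i(t_i,\cdot)\,\mathrm d\lambda_i(t_i)$ as measures on $A_i$; for a pure $f_i$ this means $\lambda_i(E\cap f_i^{-1}(B))=\int_E g_i(t_i,B)\,\mathrm d\lambda_i(t_i)$ for all Borel $B\subseteq A_i$.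 *)

From HB Require Import structures.
From mathcomp Require Import all_boot all_order all_algebra.
From mathcomp Require Import all_classical all_reals all_analysis.
From mathcomp Require Import measurable_realfun.
Set Implicit Arguments. Unset Strict Implicit. Unset Printing Implicit Defensive.
Import Order.TTheory GRing.Theory Num.Theory.
Local Open Scope classical_set_scope.
Local Open Scope ring_scope.

Definition borel (A : ptopologicalType) := g_sigma_algebraType (@open A).

Definition supp (R : realType) (A : ptopologicalType)
  (mu : set (borel A) -> \bar R) : set A :=
  [set a : A | forall U : set A, open U -> U a -> (0 < mu U)%E].

Definition atomless d (T : measurableType d) (R : realType)
  (mu : set T -> \bar R) :=
  forall E : set T, measurable E -> (0 < mu E)%E ->
    exists F : set T, [/\ measurable F, F `<=` E, (0 < mu F)%E & (mu F < mu E)%E].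

Definition countably_generated_sub_sigma d (T : measurableType d)
  (F : set (set T)) :=
  [/\ sigma_algebra setT F, F `<=` measurable &
      exists G : set (set T), countable G /\ F = <<s G >>].

Definition measurable_wrt (T : Type) (R : realType) (F : set (set T))
  (h : T -> \bar R) :=
  forall Y : set (\bar R), measurable Y -> F (h @^-1` Y).

(* A point a lies outside the support of a measure mu exactly when some basic
   open neighbourhood of a has mu-measure zero.  Fix a countable base of the
   compact metric space A_i.  For a basic open set V, distribution equivalence
   applied to the F_i-measurable event E = {t | g_i(t)(V) = 0} gives
   lam_i(E ∩ f_i^-1 V) = ∫_E g_i(t)(V) = 0.  Hence the set of types t with
   f_i(t) outside supp g_i(t) is covered by countably many null sets. *)
From HB Require Import structures.
From mathcomp Require Import all_boot all_order all_algebra.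
From mathcomp Require Import all_classical all_reals all_analysis.
From mathcomp Require Import measurable_realfun.
Set Implicit Arguments. Unset Strict Implicit. Unset Printing Implicit Defensive.
Import Order.TTheory GRing.Theory Num.Theory.
Local Open Scope classical_set_scope.
Local Open Scope ring_scope.

Lemma negligible_bigcup_countable d (T : sigmaRingType d) (R : realFieldType)
    (mu : {measure set T -> \bar R}) I (D : set I) (F : I -> set T) :
  countable D -> (forall i, D i -> mu.-negligible (F i)) ->
  mu.-negligible (\bigcup_(i in D) F i).
Proof.
move=> /countable_injP[h hinj] FN.
pose G k := \bigcup_(i in D `&` [set i | h i = k]) F i.
have GN k : mu.-negligible (G k).
  have [[i [Di hik]]|noi] := pselect (exists i, D i /\ h i = k).
    apply: (negligibleS _ (FN i Di)) => t [j [Dj hjk] Fjt].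
    by have -> : i = j by apply: hinj; rewrite ?inE // hik hjk.
  by apply: (negligibleS _ (negligible_set0 mu)) => t [j [Dj hjk] _]; apply: noi; exists j.
apply: (negligibleS _ (negligible_bigcup GN)) => t [i Di Fit].
by exists (h i) => //; exists i.
Qed.

Lemma not_supp_basis (R : realType) (A : ptopologicalType)
    (mu : {measure set (borel A) -> \bar R}) (B : set (set A)) (a : A) :
  basis B -> ~ supp mu a -> exists2 V, B V & V a /\ mu V = 0%E.
Proof.
move=> [Bopen Bbase] /existsNP[U /not_implyP[oU /not_implyP[Ua /negP]]].
rewrite -leNgt => muU0.
have [V [BV Va] VU] : filter_from [set V | B V /\ V a] id U.
  by apply: Bbase; exact: open_nbhs_nbhs.
exists V => //; split => //; apply/eqP; rewrite eq_le measure_ge0 andbT.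
apply: le_trans muU0; apply: le_measure => //; rewrite inE.
- by apply: sub_sigma_algebra; exact: Bopen.
- exact: sub_sigma_algebra.
Qed.

Lemma negligible_integral_weight0 d (T : measurableType d) (R : realType)
    (mu : {measure set T -> \bar R}) (w : T -> \bar R) (E S : set T) :
  measurable E -> measurable S -> (forall t, E t -> w t = 0%E) ->
  mu (E `&` S) = (\int[mu]_(t in E) w t)%E -> mu.-negligible (E `&` S).
Proof.
move=> mE mS w0 muES; exists (E `&` S); split => //; first exact: measurableI.
by rewrite muES; apply: integral0_eq.
Qed.

Theorem proposition3 (R : realType) (n : nat)
  (A : 'I_n -> pseudoPMetricType R)
  (hA : forall i, hausdorff_space (A i) /\ compact [set: A i])
  (d : 'I_n -> measure_display) (T : forall i, measurableType (d i))
  (lam : forall i, probability (T i) R)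
  (hlam : forall i, measure_is_complete (lam i) /\ atomless (lam i))
  (F : forall i, set (set (T i)))
  (hF : forall i, countably_generated_sub_sigma (F i))
  (f : forall i, T i -> A i)
  (hf : forall i, measurable_fun setT (f i : T i -> borel (A i)))
  (g : forall i, T i -> probability (borel (A i)) R)
  (hg : forall i (B : set (borel (A i))), measurable B ->
          measurable_wrt (F i) (fun t => g i t B))
  (hequiv : forall i (E : set (T i)), F i E ->
      forall B : set (borel (A i)), measurable B ->
        lam i (E `&` (f i @^-1` B)) = (\int[lam i]_(t in E) g i t B)%E) :
  forall i, {ae lam i, forall t, supp (g i t) (f i t)}.
Proof.
move=> i; have [B Bcount Bbasis] := compact_second_countable (hA i).2.
have [_ FT _] := hF i.
pose null_at V := [set t | g i t V = 0%E] `&` (f i @^-1` V).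
have nullN V : B V -> (lam i).-negligible (null_at V).
  move=> BV; have mV : measurable (V : set (borel (A i))).
    by apply: sub_sigma_algebra; exact: Bbasis.1.
  have FE : F i [set t | g i t V = 0%E].
    exact: (hg i V mV _ (emeasurable_set1 0%E)).
  apply: negligible_integral_weight0 (hequiv i _ FE V mV) => //.
  - exact: FT.
  - by rewrite -[_ @^-1` _]setTI; exact: hf.
apply: (negligibleS _ (negligible_bigcup_countable Bcount nullN)) => t /= nsupp.
have [V BV [Vft gV0]] := not_supp_basis Bbasis nsupp.
by exists V.
Qed.
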